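(* Let $Q$ be a square region of width (side length) $R$ and let $r$ be an awake robot positioned at the center of $Q$ which knows $Q$ and the initial positions of a set $S$ of sleeping robots whose initial positions all lie in $Q$. If no robot other than those in $\{r\}\cup S$ takes action in $Q$, then $r$ can wake up all robots of $S$ within time $5R$.
   Context: Model: robots in the Euclidean plane; sleeping robots do nothing until woken. Awake robots know the global coordinates, share a global clock, can compute, move at speed $1$ (distance $\delta$ takes time $\delta$) or wait, and exchange information only with co-located robots. An awake robot co-located with a sleeping robot can wake it up and share information with it; the woken robot then acts as an awake robot (in particular it can help wake up others). *)

From Stdlib Require Import Reals Lra.
Open Scope R_scope.

Definition pt : Type := (R * R)%type.

Definition dist (p q : pt) : R :=
  sqrt ((fst p - fst q) ^ 2 + (snd p - snd q) ^ 2).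

(* The closed square of side length w, centered at c, with (unit) axis
   direction u and second axis v = u rotated by 90 degrees. *)
Definition in_square (c u : pt) (w : R) (p : pt) : Prop :=
  let dx := fst p - fst c in
  let dy := snd p - snd c in
  Rabs (dx * fst u + dy * snd u) <= w / 2 /\
  Rabs (- dx * snd u + dy * fst u) <= w / 2.

(* Robots are indexed 0..n; robot 0 is the initially awake robot r,
   robots 1..n are the sleeping robots.  init i is the initial position.
   A wake-up schedule consists of:
   - traj i t : position of robot i at time t (t >= 0),
   - wake i   : the time at which robot i is woken (wake 0 = 0),
   - parent i : the robot that wakes robot i.
   Conditions: sleeping robots stay at their initial position until woken;
   every robot moves at speed at most 1; robot i (i >= 1) is woken at time
   wake i by robot parent i, which is then at init i and already awake
   (either it is r, or it was woken strictly earlier; this makes the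
   "who-woke-whom" relation well founded). *)
Record valid_schedule (n : nat) (init : nat -> pt) (traj : nat -> R -> pt)
    (wake : nat -> R) (parent : nat -> nat) : Prop := {
  vs_wake0 : wake 0%nat = 0;
  vs_wake_nonneg : forall i, (i <= n)%nat -> 0 <= wake i;
  vs_asleep : forall i t, (i <= n)%nat -> 0 <= t -> t <= wake i ->
      traj i t = init i;
  vs_speed : forall i s t, (i <= n)%nat -> 0 <= s -> 0 <= t ->
      dist (traj i s) (traj i t) <= Rabs (s - t);
  vs_parent_range : forall i, (1 <= i <= n)%nat ->
      (parent i <= n)%nat /\ parent i <> i;
  vs_parent_awake : forall i, (1 <= i <= n)%nat ->
      parent i = 0%nat \/ wake (parent i) < wake i;
  vs_parent_meet : forall i, (1 <= i <= n)%nat ->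
      traj (parent i) (wake i) = init i
}.

Definition init_of (c : pt) (pos : nat -> pt) (i : nat) : pt :=
  match i with O => c | S k => pos k end.

(* Induction on the number of sleeping robots, with the invariant: a robot standing at
   x at time t can wake all sleeping robots of an axis-parallel square with centre c and
   side s by time t + |xc| + 5s.  It walks to some sleeping robot p, at q in quadrant k,
   and wakes it; it keeps quadrant k and the clockwise next one, and hands the other two
   quadrants to p.  Each of the two walks to a sleeping robot z of its first quadrant,
   wakes it and leaves it the second quadrant, so that four awake robots now face one
   quadrant of side s/2 each.  By the triangle inequality the invariant is restored as
   soon as |cq| + |qz| + |zc'| <= 5s/2, where c' is the centre of the quadrant to be
   cleared from z.  Coarse bounds suffice except when q is in quadrant k, z in the
   counterclockwise next one and c' the centre of the opposite one, where the route is
   about 2.4977 s long.  The theorem is the case x = c, t = 0, in a frame in which the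
   square is axis-parallel. *)

From Stdlib Require Import Reals Lra Lia List.
Import ListNotations.
Open Scope R_scope.

Lemma dist_euc_eq p q : dist p q = dist_euc (fst p) (snd p) (fst q) (snd q).
Proof. unfold dist, dist_euc; rewrite !Rsqr_pow2; reflexivity. Qed.

Lemma dist_nonneg p q : 0 <= dist p q.
Proof. apply sqrt_pos. Qed.

Lemma dist_sym p q : dist p q = dist q p.
Proof. rewrite !dist_euc_eq; apply distance_symm. Qed.

Lemma dist_refl p : dist p p = 0.
Proof. rewrite dist_euc_eq; apply distance_refl. Qed.

Lemma dist_triangle p q z : dist p z <= dist p q + dist q z.
Proof. rewrite !dist_euc_eq; apply triangle. Qed.

Lemma dist_eq_0 p q : dist p q = 0 -> p = q.
Proof.
  unfold dist; intro H.
  pose proof (pow2_ge_0 (fst p - fst q)); pose proof (pow2_ge_0 (snd p - snd q)).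
  apply sqrt_eq_0 in H; [|lra].
  destruct p as [a b], q as [a' b']; simpl in *.
  f_equal; nra.
Qed.

Lemma dist_pos p q : p <> q -> 0 < dist p q.
Proof.
  intro Hpq; destruct (Rle_lt_or_eq_dec _ _ (dist_nonneg p q)) as [|E]; auto.
  symmetry in E; apply dist_eq_0 in E; contradiction.
Qed.

Lemma dist_le_of_sq p q e :
  0 <= e -> (fst p - fst q) ^ 2 + (snd p - snd q) ^ 2 <= e ^ 2 -> dist p q <= e.
Proof. intros He H; rewrite <- (sqrt_pow2 e He); apply sqrt_le_1_alt, H. Qed.

(** * Unit-speed motions *)

Definition lipschitz1 (f : R -> pt) : Prop :=
  forall s t, dist (f s) (f t) <= Rabs (s - t).

Lemma lipschitz1_const x : lipschitz1 (fun _ => x).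
Proof. intros s t; rewrite dist_refl; apply Rabs_pos. Qed.

Lemma lipschitz1_glue f g m :
  lipschitz1 f -> lipschitz1 g -> f m = g m ->
  lipschitz1 (fun t => if Rle_dec t m then f t else g t).
Proof.
  intros Hf Hg Hm s t.
  destruct (Rle_dec s m) as [Hs|Hs], (Rle_dec t m) as [Ht|Ht]; auto.
  - pose proof (dist_triangle (f s) (f m) (g t)).
    pose proof (Hf s m); pose proof (Hg m t); rewrite Hm in *.
    unfold Rabs in *; repeat destruct Rcase_abs; lra.
  - pose proof (dist_triangle (g s) (g m) (f t)).
    pose proof (Hg s m); pose proof (Hf m t); rewrite Hm in *.
    unfold Rabs in *; repeat destruct Rcase_abs; lra.
Qed.

Definition interp (x q : pt) (l : R) : pt :=
  (fst x + l * (fst q - fst x), snd x + l * (snd q - snd x)).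

Lemma dist_interp x q l1 l2 :
  dist (interp x q l1) (interp x q l2) = Rabs (l1 - l2) * dist x q.
Proof.
  unfold dist, interp; cbn [fst snd].
  pose proof (pow2_ge_0 (fst x - fst q)); pose proof (pow2_ge_0 (snd x - snd q)).
  rewrite <- sqrt_Rsqr_abs, <- sqrt_mult by (try apply Rle_0_sqr; lra).
  f_equal; unfold Rsqr; ring.
Qed.

(* After its arrival at [q] at time [t + dist x q], [travel] keeps moving past [q];
   it is only used up to that time. *)
Definition travel (x q : pt) (t tau : R) : pt :=
  if Rle_dec tau t then x else interp x q ((tau - t) / dist x q).

Lemma travel_before x q t tau : tau <= t -> travel x q t tau = x.
Proof. unfold travel; intro H; destruct Rle_dec; [reflexivity|lra]. Qed.

Lemma travel_arrive x q t : travel x q t (t + dist x q) = q.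
Proof.
  unfold travel; destruct (Req_dec (dist x q) 0) as [E|E].
  - rewrite E, Rplus_0_r; destruct Rle_dec; [|lra]; apply dist_eq_0, E.
  - pose proof (dist_nonneg x q); destruct Rle_dec; [lra|].
    replace ((t + dist x q - t) / dist x q) with 1 by (field; exact E).
    unfold interp; destruct x, q; simpl; f_equal; ring.
Qed.

Lemma lipschitz1_travel x q t : lipschitz1 (travel x q t).
Proof.
  apply lipschitz1_glue.
  - apply lipschitz1_const.
  - intros s s'; rewrite dist_interp.
    destruct (Req_dec (dist x q) 0) as [E|E].
    + rewrite E, Rmult_0_r; apply Rabs_pos.
    + pose proof (dist_nonneg x q).
      replace ((s - t) / dist x q - (s' - t) / dist x q) with ((s - s') / dist x q)
        by (field; exact E).
      unfold Rdiv; rewrite Rabs_mult, (Rabs_right (/ dist x q)), Rmult_assoc, Rinv_l;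
        [lra|exact E|left; apply Rinv_0_lt_compat; lra].
  - unfold interp; replace ((t - t) / dist x q) with 0 by (unfold Rdiv; ring).
    destruct x; simpl; f_equal; ring.
Qed.

(** * Wake-up plans *)

Section Plans.

Variable init : nat -> pt.

(* Robot [r], standing at [x] until time [t], wakes every robot of [L] by time [B],
   either itself or through robots of [L] that it has woken before.  Robots of [L]
   lying at [x] may be woken at time [t] itself. *)
Record plan (r : nat) (x : pt) (t : R) (L : list nat) (B : R)
    (traj : nat -> R -> pt) (wake : nat -> R) (parent : nat -> nat) : Prop := {
  plan_start : forall tau, tau <= t -> traj r tau = x;
  plan_lipschitz : forall i, i = r \/ In i L -> lipschitz1 (traj i);
  plan_asleep : forall j tau, In j L -> tau <= wake j -> traj j tau = init j;
  plan_wake : forall j, In j L -> t <= wake j <= B;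
  plan_parent : forall j, In j L ->
    parent j = r \/ In (parent j) L /\ wake (parent j) < wake j;
  plan_meet : forall j, In j L -> traj (parent j) (wake j) = init j
}.

Definition can_wake (r : nat) (x : pt) (t : R) (L : list nat) (B : R) : Prop :=
  exists traj wake parent, plan r x t L B traj wake parent.

Lemma can_wake_nil r x t B : can_wake r x t [] B.
Proof.
  exists (fun _ _ => x), (fun _ => 0), (fun _ => r).
  split; try contradiction; auto using lipschitz1_const.
Qed.

Lemma can_wake_le r x t L B B' : B <= B' -> can_wake r x t L B -> can_wake r x t L B'.
Proof.
  intros HB (traj & wake & parent & []); exists traj, wake, parent.
  split; auto; intros j Hj; specialize (plan_wake0 j Hj); lra.
Qed.

Lemma can_wake_ext r x t L L' B :
  (forall j, In j L <-> In j L') -> can_wake r x t L B -> can_wake r x t L' B.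
Proof.
  intros HL (traj & wake & parent & []); exists traj, wake, parent.
  split; intros; rewrite <- ?HL in *; auto.
Qed.

Lemma plan_wake_after_start r x t L B traj wake parent j :
  plan r x t L B traj wake parent -> In j L -> parent j = r -> init j <> x ->
  t < wake j.
Proof.
  intros [S Lip _ W _ M] Hj Hpar Hx.
  pose proof (W j Hj); pose proof (Lip r (or_introl eq_refl) (wake j) t) as Hlip.
  rewrite (S t (Rle_refl t)), <- Hpar, (M j Hj), Rabs_right in Hlip by lra.
  pose proof (dist_pos _ _ Hx); lra.
Qed.

Lemma can_wake_travel r x q t L B :
  ~ In r L -> can_wake r q (t + dist x q) L B -> can_wake r x t L B.
Proof.
  intros HrL (traj & wake & parent & [S Lip A W Par M]).
  set (t1 := t + dist x q) in *.
  assert (Htt1 : t <= t1) by (pose proof (dist_nonneg x q); unfold t1; lra).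
  set (trajr := fun tau => if Rle_dec tau t1 then travel x q t tau else traj r tau).
  assert (Htrajr : forall tau, t1 <= tau -> trajr tau = traj r tau).
  { intros tau Htau; unfold trajr; destruct Rle_dec; auto.
    replace tau with t1 by lra; rewrite S by lra; apply travel_arrive. }
  exists (fun i => if Nat.eq_dec i r then trajr else traj i), wake, parent.
  split; auto.
  - intros tau Htau; destruct (Nat.eq_dec r r); [|congruence].
    unfold trajr; destruct Rle_dec; [apply travel_before, Htau|lra].
  - intros i Hi; destruct (Nat.eq_dec i r) as [->|]; [|apply Lip; tauto].
    apply lipschitz1_glue; auto using lipschitz1_travel.
    rewrite travel_arrive, S; auto; lra.
  - intros j tau Hj; destruct (Nat.eq_dec j r) as [->|]; [contradiction|auto].
  - intros j Hj; specialize (W j Hj); lra.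
  - intros j Hj; destruct (Nat.eq_dec (parent j) r) as [Er|]; auto.
    rewrite Htrajr, <- Er; [apply M, Hj|apply W, Hj].
Qed.

Lemma plan_join r p q t L1 L2 B traj wake parent traj1 wake1 parent1 traj2 wake2 parent2 :
  init p = q -> (forall j, In j L2 -> init j <> q) -> t <= B ->
  (forall i, i = r \/ In i L1 -> traj i = traj1 i) ->
  (forall i, i = p \/ In i L2 -> traj i = traj2 i) ->
  (forall j, In j L1 -> wake j = wake1 j /\ parent j = parent1 j) ->
  (forall j, In j L2 -> wake j = wake2 j /\ parent j = parent2 j) ->
  wake p = t -> parent p = r ->
  plan r q t L1 B traj1 wake1 parent1 -> plan p q t L2 B traj2 wake2 parent2 ->
  plan r q t (p :: L1 ++ L2) B traj wake parent.
Proof.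
  intros Hp HL2q HtB T1 T2 E1 E2 Ewp Epp P1 P2.
  assert (Hlate : forall j, In j L2 -> parent2 j = p -> t < wake2 j).
  { intros j Hj Hpar; apply (plan_wake_after_start _ _ _ _ _ _ _ _ _ P2); auto. }
  destruct P1 as [S1 Lip1 A1 W1 Par1 M1], P2 as [S2 Lip2 A2 W2 Par2 M2].
  assert (Hcases : forall j, In j (p :: L1 ++ L2) -> j = p \/ In j L1 \/ In j L2).
  { intros j [<-|Hj]; [now left|right]; apply in_app_or, Hj. }
  assert (Hin1 : forall j, In j L1 -> In j (p :: L1 ++ L2))
    by (intros; right; apply in_or_app; auto).
  assert (Hin2 : forall j, In j L2 -> In j (p :: L1 ++ L2))
    by (intros; right; apply in_or_app; auto).
  split.
  - intros tau Htau; rewrite T1; auto.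
  - intros i [->|Hi]; [rewrite T1; auto|].
    destruct (Hcases i Hi) as [->|[H1|H2]]; [rewrite T2|rewrite T1|rewrite T2]; auto.
  - intros j tau Hj; destruct (Hcases j Hj) as [->|[H1|H2]].
    + rewrite Ewp; intro; rewrite T2, S2, Hp; auto.
    + destruct (E1 j H1) as [-> _]; rewrite T1; auto.
    + destruct (E2 j H2) as [-> _]; rewrite T2; auto.
  - intros j Hj; destruct (Hcases j Hj) as [->|[H1|H2]].
    + rewrite Ewp; lra.
    + destruct (E1 j H1) as [-> _]; apply W1, H1.
    + destruct (E2 j H2) as [-> _]; apply W2, H2.
  - intros j Hj; destruct (Hcases j Hj) as [->|[H1|H2]].
    + left; exact Epp.
    + destruct (E1 j H1) as [-> ->].
      destruct (Par1 j H1) as [|[Hpar Hlt]]; [now left|right].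
      split; [auto|]; destruct (E1 _ Hpar) as [-> _]; exact Hlt.
    + destruct (E2 j H2) as [-> ->]; right.
      destruct (Par2 j H2) as [Epar|[Hpar Hlt]].
      * rewrite Epar, Ewp; split; [now left|]; apply Hlate; auto.
      * split; [auto|]; destruct (E2 _ Hpar) as [-> _]; exact Hlt.
  - intros j Hj; destruct (Hcases j Hj) as [->|[H1|H2]].
    + rewrite Ewp, Epp, T1, S1, Hp; auto; lra.
    + destruct (E1 j H1) as [-> ->]; rewrite T1; [apply M1, H1|].
      destruct (Par1 j H1) as [|[]]; auto.
    + destruct (E2 j H2) as [-> ->]; rewrite T2; [apply M2, H2|].
      destruct (Par2 j H2) as [|[]]; auto.
Qed.

Lemma can_wake_join r p q t L1 L2 B :
  init p = q -> r <> p -> ~ In r L1 -> ~ In r L2 -> ~ In p L1 -> ~ In p L2 ->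
  (forall j, In j L1 -> ~ In j L2) -> (forall j, In j L2 -> init j <> q) -> t <= B ->
  can_wake r q t L1 B -> can_wake p q t L2 B -> can_wake r q t (p :: L1 ++ L2) B.
Proof.
  intros Hp Hrp HrL1 HrL2 HpL1 HpL2 HL12 HL2q HtB
    (traj1 & wake1 & parent1 & P1) (traj2 & wake2 & parent2 & P2).
  exists (fun i => if in_dec Nat.eq_dec i (p :: L2) then traj2 i else traj1 i),
    (fun i => if Nat.eq_dec i p then t else if in_dec Nat.eq_dec i L2 then wake2 i else wake1 i),
    (fun i => if Nat.eq_dec i p then r
              else if in_dec Nat.eq_dec i L2 then parent2 i else parent1 i).
  apply plan_join with (traj1 := traj1) (wake1 := wake1) (parent1 := parent1)
    (traj2 := traj2) (wake2 := wake2) (parent2 := parent2); cbv beta; auto.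
  - intros i Hi; destruct in_dec as [[<-|Hin]|]; auto; exfalso.
    + destruct Hi as [->|Hi]; [congruence|contradiction].
    + destruct Hi as [->|Hi]; [contradiction|exact (HL12 _ Hi Hin)].
  - intros i Hi; destruct in_dec as [|Hin]; auto; exfalso; apply Hin.
    destruct Hi as [->|]; [left|right]; auto.
  - intros j Hj; destruct Nat.eq_dec as [->|]; [contradiction|].
    destruct in_dec as [Hin|]; [exfalso; exact (HL12 _ Hj Hin)|easy].
  - intros j Hj; destruct Nat.eq_dec as [->|]; [contradiction|].
    destruct in_dec; [easy|contradiction].
  - destruct Nat.eq_dec; congruence.
  - destruct Nat.eq_dec; congruence.
Qed.

End Plans.

Lemma valid_schedule_of_plan n init B traj wake parent :
  0 <= B -> plan init 0 (init 0%nat) 0 (seq 1 n) B traj wake parent ->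
  valid_schedule n init traj (fun i => match i with O => 0 | S _ => wake i end) parent /\
  (forall i, (i <= n)%nat -> match i with O => 0 | S _ => wake i end <= B).
Proof.
  intros HB [S Lip A W Par M].
  assert (Hseq : forall i, In i (seq 1 n) <-> (1 <= i <= n)%nat) by (intro; rewrite in_seq; lia).
  split; [split|].
  - reflexivity.
  - intros [|i] Hi; [lra|]; apply W, Hseq; lia.
  - intros [|i] t Hi Ht Hle; [apply S, Hle|apply A; [apply Hseq; lia|exact Hle]].
  - intros [|i] s t Hi _ _; apply Lip; [now left|right; apply Hseq; lia].
  - intros i Hi; destruct (Par i (proj2 (Hseq i) Hi)) as [->|[Hpar Hlt]]; [lia|].
    apply Hseq in Hpar; split; [lia|intros E; rewrite E in Hlt; lra].
  - intros i Hi; destruct (Par i (proj2 (Hseq i) Hi)) as [|[Hpar Hlt]]; [now left|right].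
    apply Hseq in Hpar; destruct (parent i), i; lia || exact Hlt.
  - intros i Hi; destruct i as [|i]; [lia|]; apply M, Hseq, Hi.
  - intros [|i] Hi; [exact HB|apply W, Hseq; lia].
Qed.

(** * Quadrants and routes *)

Definition in_box (c : pt) (s : R) (p : pt) : Prop :=
  fst c - s / 2 <= fst p <= fst c + s / 2 /\ snd c - s / 2 <= snd p <= snd c + s / 2.

Inductive quadrant : Set := NE | NW | SW | SE.

Definition quadrant_eq_dec (k k' : quadrant) : {k = k'} + {k <> k'}.
Proof. decide equality. Defined.

Definition quadrant_next (k : quadrant) : quadrant :=
  match k with NE => NW | NW => SW | SW => SE | SE => NE end.

Definition quadrant_opp (k : quadrant) : quadrant := quadrant_next (quadrant_next k).

Definition quadrant_prev (k : quadrant) : quadrant := quadrant_next (quadrant_opp k).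

Lemma quadrant_cover k v :
  v = k \/ v = quadrant_next k \/ v = quadrant_opp k \/ v = quadrant_prev k.
Proof. destruct k, v; simpl; auto. Qed.

Lemma quadrant_halves_disjoint k v :
  v = k \/ v = quadrant_prev k -> v = quadrant_next k \/ v = quadrant_opp k -> False.
Proof.
  unfold quadrant_prev, quadrant_opp; destruct k; intros [-> | ->] [E | E]; discriminate.
Qed.

Definition quadrant_of (c p : pt) : quadrant :=
  if Rle_dec (fst c) (fst p) then (if Rle_dec (snd c) (snd p) then NE else SE)
  else (if Rle_dec (snd c) (snd p) then NW else SW).

Definition quadrant_center (c : pt) (s : R) (k : quadrant) : pt :=
  match k with
  | NE => (fst c + s / 4, snd c + s / 4)
  | NW => (fst c - s / 4, snd c + s / 4)
  | SW => (fst c - s / 4, snd c - s / 4)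
  | SE => (fst c + s / 4, snd c - s / 4)
  end.

Lemma in_box_quadrant_of c s p :
  in_box c s p -> in_box (quadrant_center c s (quadrant_of c p)) (s / 2) p.
Proof. unfold in_box, quadrant_of; intro; repeat destruct Rle_dec; simpl; lra. Qed.

Lemma in_box_of_quadrant c s k p :
  0 <= s -> in_box (quadrant_center c s k) (s / 2) p -> in_box c s p.
Proof. unfold in_box; destruct k; simpl; lra. Qed.

Lemma sqr_le_of_bounds a b : - b <= a <= b -> a ^ 2 <= b ^ 2.
Proof. intro H; apply pow_maj_Rabs, Rabs_le, H. Qed.

Lemma dist_center_le c s p : 0 <= s -> in_box c s p -> dist c p <= 71 / 100 * s.
Proof.
  intros Hs [Hx Hy]; apply dist_le_of_sq; [lra|].
  pose proof (sqr_le_of_bounds (fst c - fst p) (s / 2) ltac:(lra)).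
  pose proof (sqr_le_of_bounds (snd c - snd p) (s / 2) ltac:(lra)); nra.
Qed.

Lemma dist_in_box_le c s p q :
  0 <= s -> in_box c s p -> in_box c s q -> dist p q <= 142 / 100 * s.
Proof.
  intros Hs [Hx Hy] [Hx' Hy']; apply dist_le_of_sq; [lra|].
  pose proof (sqr_le_of_bounds (fst p - fst q) s ltac:(lra)).
  pose proof (sqr_le_of_bounds (snd p - snd q) s ltac:(lra)); nra.
Qed.

Lemma dist_quadrant_center_le c s k p :
  0 <= s -> in_box c s p -> dist p (quadrant_center c s k) <= 107 / 100 * s.
Proof.
  intros Hs [Hx Hy]; apply dist_le_of_sq; [lra|].
  assert (Hb : forall a b, - (3 / 4 * s) <= a <= 3 / 4 * s -> - (3 / 4 * s) <= b <= 3 / 4 * s ->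
    a ^ 2 + b ^ 2 <= (107 / 100 * s) ^ 2).
  { intros a b Ha Hb.
    pose proof (sqr_le_of_bounds a _ Ha); pose proof (sqr_le_of_bounds b _ Hb); nra. }
  destruct k; simpl; apply Hb; lra.
Qed.

Lemma route_same_quadrant_le c s k b q z :
  0 <= s -> in_box (quadrant_center c s k) (s / 2) q ->
  in_box (quadrant_center c s k) (s / 2) z ->
  dist c q + dist q z + dist z (quadrant_center c s b) <= 5 / 2 * s.
Proof.
  intros Hs Hq Hz.
  pose proof (dist_center_le c s q Hs (in_box_of_quadrant _ _ _ _ Hs Hq)).
  pose proof (dist_in_box_le _ (s / 2) q z ltac:(lra) Hq Hz).
  pose proof (dist_quadrant_center_le c s b z Hs (in_box_of_quadrant _ _ _ _ Hs Hz)).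
  lra.
Qed.

Lemma route_own_center_le c s a q z :
  0 <= s -> in_box c s q -> in_box (quadrant_center c s a) (s / 2) z ->
  dist c q + dist q z + dist z (quadrant_center c s a) <= 5 / 2 * s.
Proof.
  intros Hs Hq Hz.
  pose proof (dist_center_le c s q Hs Hq).
  pose proof (dist_in_box_le c s q z Hs Hq (in_box_of_quadrant _ _ _ _ Hs Hz)).
  pose proof (dist_center_le _ (s / 2) z ltac:(lra) Hz); rewrite (dist_sym z).
  lra.
Qed.

Lemma sqrt_le_tangent X m : 0 <= X -> 0 < m -> sqrt X <= (X / m + m) / 2.
Proof.
  intros HX Hm; pose proof (sqrt_pos X); pose proof (sqrt_sqrt X HX).
  pose proof (pow2_ge_0 (sqrt X - m)).
  apply (Rmult_le_reg_r (2 * m)); [lra|].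
  replace ((X / m + m) / 2 * (2 * m)) with (X + m * m) by (field; lra); nra.
Qed.

(* [(a1, b1)] and [(a2, b2)] are the positions of [q] and [z] relative to the centre,
   rotated so that [q] lies in the NE quadrant and [z] in the NW one.  The three
   square roots are bounded by their tangents at the extremal configuration
   [(a1, b1) = (s/2, s/2)], [(a2, b2) = (-s/2, s/2)], where the legs have lengths
   [s / sqrt 2], [s] and [s sqrt 10 / 4]; the route is then about [2.4977 s] long. *)
Lemma three_legs_le s a1 b1 a2 b2 X1 X2 X3 :
  0 <= s -> 0 <= a1 <= s / 2 -> 0 <= b1 <= s / 2 -> - (s / 2) <= a2 <= 0 -> 0 <= b2 <= s / 2 ->
  X1 = a1 ^ 2 + b1 ^ 2 -> X2 = (a1 - a2) ^ 2 + (b1 - b2) ^ 2 ->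
  X3 = (a2 + s / 4) ^ 2 + (b2 + s / 4) ^ 2 ->
  sqrt X1 + sqrt X2 + sqrt X3 <= 5 / 2 * s.
Proof.
  intros Hs Ha1 Hb1 Ha2 Hb2 -> -> ->.
  destruct (Rle_lt_or_eq_dec 0 s Hs) as [Hs0|<-]; cycle 1.
  - replace a1 with 0 by lra; replace b1 with 0 by lra.
    replace a2 with 0 by lra; replace b2 with 0 by lra.
    assert (E : forall u, u = 0 -> sqrt u = 0) by (intros u ->; apply sqrt_0).
    rewrite !E by field; lra.
  - assert (Hsq : forall u v, 0 <= u ^ 2 + v ^ 2)
      by (intros u v; pose proof (pow2_ge_0 u); pose proof (pow2_ge_0 v); lra).
    pose proof (sqrt_le_tangent _ (7071 / 10000 * s) (Hsq a1 b1) ltac:(lra)).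
    pose proof (sqrt_le_tangent _ s (Hsq (a1 - a2) (b1 - b2)) Hs0).
    pose proof (sqrt_le_tangent _ (7906 / 10000 * s) (Hsq (a2 + s / 4) (b2 + s / 4)) ltac:(lra)).
    set (K := (a1 ^ 2 + b1 ^ 2) * (10000 / 7071) + ((a1 - a2) ^ 2 + (b1 - b2) ^ 2)
              + ((a2 + s / 4) ^ 2 + (b2 + s / 4) ^ 2) * (10000 / 7906)).
    assert (HK : K / s <= 24977 / 10000 * s).
    { apply (Rmult_le_reg_r s); [lra|].
      replace (K / s * s) with K by (field; lra); unfold K; nra. }
    enough (Hsum : ((a1 ^ 2 + b1 ^ 2) / (7071 / 10000 * s) + 7071 / 10000 * s) / 2
      + (((a1 - a2) ^ 2 + (b1 - b2) ^ 2) / s + s) / 2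
      + (((a2 + s / 4) ^ 2 + (b2 + s / 4) ^ 2) / (7906 / 10000 * s) + 7906 / 10000 * s) / 2
      = (K / s + 24977 / 10000 * s) / 2) by lra.
    unfold K; field; lra.
Qed.

Lemma route_next_opp_le c s k q z :
  0 <= s -> in_box (quadrant_center c s k) (s / 2) q ->
  in_box (quadrant_center c s (quadrant_next k)) (s / 2) z ->
  dist c q + dist q z + dist z (quadrant_center c s (quadrant_opp k)) <= 5 / 2 * s.
Proof.
  intros Hs Hq Hz; unfold dist; destruct k; unfold in_box in *; simpl in *.
  - apply (three_legs_le s (fst q - fst c) (snd q - snd c) (fst z - fst c) (snd z - snd c));
      try lra; field.
  - apply (three_legs_le s (snd q - snd c) (fst c - fst q) (snd z - snd c) (fst c - fst z));
      try lra; field.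
  - apply (three_legs_le s (fst c - fst q) (snd c - snd q) (fst c - fst z) (snd c - snd z));
      try lra; field.
  - apply (three_legs_le s (snd c - snd q) (fst q - fst c) (snd c - snd z) (fst z - fst c));
      try lra; field.
Qed.

(** * The quadrant strategy *)

Section Recursion.

Variable init : nat -> pt.

Definition quadrant_part (c : pt) (k : quadrant) (L : list nat) : list nat :=
  filter (fun j => if quadrant_eq_dec (quadrant_of c (init j)) k then true else false) L.

Lemma In_quadrant_parts c k k' L j :
  In j (quadrant_part c k L ++ quadrant_part c k' L) <->
  In j L /\ (quadrant_of c (init j) = k \/ quadrant_of c (init j) = k').
Proof.
  unfold quadrant_part; rewrite in_app_iff, !filter_In.
  destruct (quadrant_eq_dec _ k), (quadrant_eq_dec _ k'); intuition congruence.
Qed.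

Definition square_bound (n : nat) : Prop :=
  forall c s r x t L, (length L <= n)%nat -> 0 <= s -> NoDup L -> ~ In r L ->
    (forall j, In j L -> in_box c s (init j)) ->
    can_wake init r x t L (t + dist x c + 5 * s).

Lemma can_wake_handoff n c s y q t L a b d :
  square_bound n -> 0 <= s -> a <> b ->
  (length L <= n)%nat -> NoDup L -> ~ In y L -> (forall j, In j L -> in_box c s (init j)) ->
  (forall z, in_box (quadrant_center c s a) (s / 2) z ->
     dist q z + dist z (quadrant_center c s a) <= d) ->
  (forall z, in_box (quadrant_center c s a) (s / 2) z ->
     dist q z + dist z (quadrant_center c s b) <= d) ->
  dist q (quadrant_center c s b) <= d ->
  can_wake init y q t (quadrant_part c a L ++ quadrant_part c b L) (t + d + 5 * (s / 2)).
Proof.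
  intros IH Hs Hab Hlen Hnd Hy Hbox Hda Hdb Hdq.
  assert (Hpart : forall k j, In j (quadrant_part c k L) ->
    In j L /\ quadrant_of c (init j) = k /\ in_box (quadrant_center c s k) (s / 2) (init j)).
  { intros k j Hj; unfold quadrant_part in Hj; rewrite filter_In in Hj.
    destruct Hj as [Hj Hk]; destruct quadrant_eq_dec as [<-|]; [|discriminate].
    auto using in_box_quadrant_of. }
  assert (Hsub : forall k r x t' L', (forall j, In j L' -> In j (quadrant_part c k L)) ->
    (length L' <= n)%nat -> NoDup L' -> ~ In r L' ->
    can_wake init r x t' L' (t' + dist x (quadrant_center c s k) + 5 * (s / 2))).
  { intros k r x t' L' HL' Hlen' Hnd' Hr'; apply IH; auto; [lra|].
    intros j Hj; apply Hpart, HL', Hj. }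
  assert (Hpart_len : forall k, (length (quadrant_part c k L) <= n)%nat)
    by (intro k; eapply Nat.le_trans; [apply filter_length_le|exact Hlen]).
  assert (Hab' : forall j j', In j (quadrant_part c a L) -> In j' (quadrant_part c b L) ->
    init j <> init j').
  { intros j j' Hj Hj' E; apply Hab.
    destruct (Hpart _ _ Hj) as (_ & <- & _), (Hpart _ _ Hj') as (_ & <- & _); congruence. }
  destruct (quadrant_part c a L) as [|pa La] eqn:Ea; simpl.
  - apply can_wake_le with (t + dist q (quadrant_center c s b) + 5 * (s / 2)); [lra|].
    apply Hsub; auto; [apply NoDup_filter, Hnd|].
    intro Hin; apply Hy, (Hpart _ _ Hin).
  - assert (Hnd_a : NoDup (pa :: La)) by (rewrite <- Ea; apply NoDup_filter, Hnd).
    apply NoDup_cons_iff in Hnd_a as [HpaLa HndLa].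
    assert (Hpa : In pa (quadrant_part c a L)) by (rewrite Ea; now left).
    assert (HLa : forall j, In j La -> In j (quadrant_part c a L)) by (rewrite Ea; now right).
    pose proof (Hpart _ _ Hpa) as (HpaL & _ & Hpa_box).
    assert (HyLa : ~ In y La) by (intro Hin; apply Hy, (Hpart _ _ (HLa _ Hin))).
    assert (HlenLa : (length La <= n)%nat)
      by (pose proof (Hpart_len a) as Hl; rewrite Ea in Hl; simpl in Hl; lia).
    pose proof (Hda _ Hpa_box); pose proof (Hdb _ Hpa_box).
    apply can_wake_travel with (init pa).
    { intros [<-|Hin]; [contradiction|].
      apply in_app_or in Hin as [Hin|Hin]; [contradiction|apply Hy, (Hpart _ _ Hin)]. }
    apply can_wake_join; auto.
    + intros <-; contradiction.
    + intros Hin; apply Hy, (Hpart _ _ Hin).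
    + intros Hin; exact (Hab' _ _ (or_introl eq_refl) Hin eq_refl).
    + intros j Hj Hj'; exact (Hab' _ _ (or_intror Hj) Hj' eq_refl).
    + intros j Hj E; exact (Hab' _ _ (or_introl eq_refl) Hj (eq_sym E)).
    + pose proof (dist_nonneg (init pa) (quadrant_center c s a)); lra.
    + eapply can_wake_le, (Hsub a); auto; lra.
    + eapply can_wake_le, (Hsub b); auto; [lra|apply NoDup_filter, Hnd|].
      intro Hin; exact (Hab' _ _ (or_introl eq_refl) Hin eq_refl).
Qed.

Lemma can_wake_own_half n c s k y q t L :
  square_bound n -> 0 <= s -> (length L <= n)%nat -> NoDup L -> ~ In y L ->
  (forall j, In j L -> in_box c s (init j)) -> in_box (quadrant_center c s k) (s / 2) q ->
  can_wake init y q t (quadrant_part c k L ++ quadrant_part c (quadrant_prev k) L)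
    (t + (5 / 2 * s - dist c q) + 5 * (s / 2)).
Proof.
  intros IH Hs Hlen Hnd Hy Hbox Hq; apply can_wake_handoff with n; auto.
  - unfold quadrant_prev, quadrant_opp; destruct k; discriminate.
  - intros z Hz; pose proof (route_same_quadrant_le c s k k q z Hs Hq Hz); lra.
  - intros z Hz; pose proof (route_same_quadrant_le c s k (quadrant_prev k) q z Hs Hq Hz); lra.
  - pose proof (route_same_quadrant_le c s k (quadrant_prev k) q q Hs Hq Hq).
    rewrite dist_refl in *; lra.
Qed.

Lemma can_wake_other_half n c s k y q t L :
  square_bound n -> 0 <= s -> (length L <= n)%nat -> NoDup L -> ~ In y L ->
  (forall j, In j L -> in_box c s (init j)) -> in_box (quadrant_center c s k) (s / 2) q ->
  can_wake init y q t
    (quadrant_part c (quadrant_next k) L ++ quadrant_part c (quadrant_opp k) L)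
    (t + (5 / 2 * s - dist c q) + 5 * (s / 2)).
Proof.
  intros IH Hs Hlen Hnd Hy Hbox Hq; apply can_wake_handoff with n; auto.
  - unfold quadrant_opp; destruct k; discriminate.
  - intros z Hz; pose proof (route_own_center_le c s (quadrant_next k) q z Hs
      (in_box_of_quadrant _ _ _ _ Hs Hq) Hz); lra.
  - intros z Hz; pose proof (route_next_opp_le c s k q z Hs Hq Hz); lra.
  - pose proof (route_same_quadrant_le c s k (quadrant_opp k) q q Hs Hq Hq).
    rewrite dist_refl in *; lra.
Qed.

Lemma square_bound_S n : square_bound n -> square_bound (S n).
Proof.
  intros IH c s r x t [|p L] Hlen Hs Hnd Hr Hbox; [apply can_wake_nil|].
  apply NoDup_cons_iff in Hnd as [HpL Hnd].
  assert (Hrp : r <> p) by (intros ->; apply Hr; now left).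
  assert (HrL : ~ In r L) by (intro; apply Hr; now right).
  assert (HlenL : (length L <= n)%nat) by (simpl in Hlen; lia).
  assert (HboxL : forall j, In j L -> in_box c s (init j)) by (intros; apply Hbox; now right).
  set (q := init p).
  assert (Hq : in_box c s q) by (apply Hbox; now left).
  pose proof (in_box_quadrant_of c s q Hq) as Hqk.
  remember (quadrant_of c q) as k eqn:Ek.
  set (L1 := quadrant_part c k L ++ quadrant_part c (quadrant_prev k) L).
  set (L2 := quadrant_part c (quadrant_next k) L ++ quadrant_part c (quadrant_opp k) L).
  assert (HL1 : forall j, In j L1 -> In j L /\ (quadrant_of c (init j) = k \/
    quadrant_of c (init j) = quadrant_prev k)) by (intro; apply In_quadrant_parts).
  assert (HL2 : forall j, In j L2 -> In j L /\ (quadrant_of c (init j) = quadrant_next k \/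
    quadrant_of c (init j) = quadrant_opp k)) by (intro; apply In_quadrant_parts).
  assert (HLL : forall i, ~ In i L -> ~ In i L1 /\ ~ In i L2)
    by (intros i Hi; split; intro Hin; [apply Hi, HL1, Hin|apply Hi, HL2, Hin]).
  destruct (HLL r HrL), (HLL p HpL).
  apply can_wake_ext with (p :: L1 ++ L2).
  { intro j; unfold L1, L2; simpl; rewrite in_app_iff, !In_quadrant_parts.
    destruct (quadrant_cover k (quadrant_of c (init j))); tauto. }
  apply can_wake_le with (t + dist x q + (5 / 2 * s - dist c q) + 5 * (s / 2)).
  { pose proof (dist_triangle x c q); lra. }
  apply can_wake_travel with q.
  { intros [|Hin]; [congruence|]; apply in_app_or in Hin as [Hin|Hin]; contradiction. }
  apply can_wake_join; auto.
  - intros j Hj1 Hj2; apply HL1 in Hj1 as [_ Hj1]; apply HL2 in Hj2 as [_ Hj2].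
    exact (quadrant_halves_disjoint k _ Hj1 Hj2).
  - intros j Hj E; apply HL2 in Hj as [_ Hj]; fold q in E; rewrite E, <- Ek in Hj.
    exact (quadrant_halves_disjoint k k (or_introl eq_refl) Hj).
  - pose proof (dist_center_le c s q Hs Hq); lra.
  - apply can_wake_own_half with n; auto.
  - apply can_wake_other_half with n; auto.
Qed.

Lemma square_bound_all n : square_bound n.
Proof.
  induction n as [|n IH]; [|apply square_bound_S, IH].
  intros c s r x t [|] Hlen; [intros; apply can_wake_nil|simpl in Hlen; lia].
Qed.

End Recursion.

(** * Change of frame *)

Definition to_frame (c u p : pt) : pt :=
  ((fst p - fst c) * fst u + (snd p - snd c) * snd u,
   - (fst p - fst c) * snd u + (snd p - snd c) * fst u).

Definition of_frame (c u p : pt) : pt :=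
  (fst c + fst p * fst u - snd p * snd u, snd c + fst p * snd u + snd p * fst u).

Lemma of_to_frame c u p : fst u ^ 2 + snd u ^ 2 = 1 -> of_frame c u (to_frame c u p) = p.
Proof.
  intro Hu; unfold of_frame, to_frame; destruct p as [a b]; simpl; f_equal.
  - transitivity (fst c + (a - fst c) * (fst u ^ 2 + snd u ^ 2)); [ring|rewrite Hu; ring].
  - transitivity (snd c + (b - snd c) * (fst u ^ 2 + snd u ^ 2)); [ring|rewrite Hu; ring].
Qed.

Lemma dist_of_frame c u p p' :
  fst u ^ 2 + snd u ^ 2 = 1 -> dist (of_frame c u p) (of_frame c u p') = dist p p'.
Proof.
  intro Hu; unfold dist, of_frame; simpl; f_equal.
  transitivity (((fst p - fst p') ^ 2 + (snd p - snd p') ^ 2) * (fst u ^ 2 + snd u ^ 2));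
    [ring|rewrite Hu; ring].
Qed.

Lemma in_square_to_frame c u w p : in_square c u w p -> in_box (0, 0) w (to_frame c u p).
Proof.
  unfold in_square, in_box, to_frame; simpl; intros [Hx Hy].
  revert Hx Hy; unfold Rabs; repeat destruct Rcase_abs; lra.
Qed.

Lemma valid_schedule_of_frame n c u init traj wake parent :
  fst u ^ 2 + snd u ^ 2 = 1 ->
  valid_schedule n (fun i => to_frame c u (init i)) traj wake parent ->
  valid_schedule n init (fun i tau => of_frame c u (traj i tau)) wake parent.
Proof.
  intros Hu [V0 Vnn Va Vs Vr Vaw Vm]; split; auto.
  - intros i t Hi Ht Hle; rewrite Va by auto; apply of_to_frame, Hu.
  - intros i s t Hi Hs Ht; rewrite dist_of_frame by exact Hu; auto.
  - intros i Hi; rewrite Vm by auto; apply of_to_frame, Hu.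
Qed.

Theorem lemma3 (w : R) (c u : pt) (n : nat) (pos : nat -> pt) :
  0 <= w ->
  fst u ^ 2 + snd u ^ 2 = 1 ->
  (forall k, (k < n)%nat -> in_square c u w (pos k)) ->
  exists (traj : nat -> R -> pt) (wake : nat -> R) (parent : nat -> nat),
    valid_schedule n (init_of c pos) traj wake parent /\
    (forall i, (i <= n)%nat -> wake i <= 5 * w).
Proof.
  intros Hw Hu Hpos.
  set (init := fun i => to_frame c u (init_of c pos i)).
  assert (Hinit0 : init 0%nat = (0, 0)) by (unfold init, to_frame; simpl; f_equal; ring).
  destruct (square_bound_all init n (0, 0) w 0%nat (0, 0) 0 (seq 1 n))
    as (traj & wake & parent & P).
  - rewrite length_seq; lia.
  - exact Hw.
  - apply seq_NoDup.
  - rewrite in_seq; lia.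
  - intros [|k] Hk; apply in_seq in Hk; [lia|].
    apply in_square_to_frame, Hpos; lia.
  - rewrite dist_refl, <- Hinit0 in P; replace (0 + 0 + 5 * w) with (5 * w) in P by ring.
    destruct (valid_schedule_of_plan n init (5 * w) traj wake parent ltac:(lra) P)
      as [V Hbound].
    eexists _, _, parent; split; [apply valid_schedule_of_frame, V; exact Hu|exact Hbound].
Qed.
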